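(* Let $d$ be a positive integer and let $\omega_N\subset\mathbb{S}^{d-1}$ be a set of $N$ distinct points on the unit sphere of $\mathbb{R}^d$. Assume that for any three distinct points $x,y,z\in\omega_N$, $$\langle x,y\rangle\langle x,z\rangle\langle y,z\rangle\le 0.$$ Then $N\le 2d$. Moreover, $N=2d$ holds only if $\omega_N$ is nearly orthogonal.
   Context: $\langle\cdot,\cdot\rangle$ is the standard Euclidean inner product and $\mathbb{S}^{d-1}=\{x\in\mathbb{R}^d:\|x\|=1\}$. A set of nonzero vectors in $\mathbb{R}^d$ is called nearly orthogonal if, among any three distinct vectors of the set, at least two are orthogonal. *)

From HB Require Import structures.
From mathcomp Require Import all_boot all_order all_algebra.
From mathcomp Require Import reals.
Set Implicit Arguments. Unset Strict Implicit. Unset Printing Implicit Defensive.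
Import Order.TTheory GRing.Theory Num.Theory.
Local Open Scope ring_scope.

Definition dot (R : realType) (d : nat) (u v : 'rV[R]_d) : R :=
  \sum_(i < d) u 0 i * v 0 i.

Definition nearly_orthogonal (R : realType) (d : nat) (S : 'rV[R]_d -> Prop) : Prop :=
  (forall v, S v -> v != 0) /\
  (forall u v w, S u -> S v -> S w -> u != v -> u != w -> v != w ->
     dot u v = 0 \/ dot u w = 0 \/ dot v w = 0).

From mathcomp Require Import all_boot all_order all_algebra.
From mathcomp Require Import reals.
From mathcomp Require Import ring lra.
Import Order.TTheory GRing.Theory Num.Theory.
Local Open Scope ring_scope.

(* Let X have the points as rows, G = X X^T their Gram matrix and A = G - 1.
   As A has zero diagonal, tr A^3 is the sum of the products A_ij A_jk A_ki over
   distinct i, j, k, each of which is nonpositive by hypothesis; so tr A^3 <= 0.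
   On the other hand tr G^k = tr H^k for H = X^T X, a d x d matrix, whence
   tr A^3 = tr ((H - 2)^2 (H + 1)) + 2N - 4d >= 2N - 4d because H + 1 is
   positive definite.  Hence N <= 2d, and if N = 2d all the products
   A_ij A_jk A_ki vanish, which is near orthogonality. *)

Section TraceIdentities.
Variable R : comPzRingType.

Lemma mxtrace_mulmx_expC m n (A : 'M[R]_(m, n)) (B : 'M_(n, m)) k :
  \tr ((A *m B) ^+ k.+1) = \tr ((B *m A) ^+ k.+1).
Proof.
have expE : (A *m B) ^+ k.+1 = A *m (B *m A) ^+ k *m B.
  elim: k => [|k IHk]; first by rewrite expr1 expr0 mulmx1.
  by rewrite exprSr IHk exprSr -!mulmxE !mulmxA.
by rewrite expE mxtrace_mulC mulmxA exprS mulmxE.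
Qed.

(* The two squares add up to tr (M^2 (H + 1)) = tr (H^3 - 3 H^2 + 4) for H = X^T X. *)
Lemma mxtrace_gram_cube m n (X : 'M[R]_(m, n)) (M : 'M[R]_n := X^T *m X - 2) :
  \tr ((X *m X^T - 1) ^+ 3) = \tr ((X *m M) *m (X *m M)^T) + \tr (M *m M^T)
    + 3 * \tr (X *m X^T) - m%:R - 4 * n%:R.
Proof.
have MT : M^T = M by rewrite /M linearB raddfMn /= trmx_mul trmxK trmx1.
rewrite MT trmx_mul MT (mulmxA (X *m M)) (mxtrace_mulC (X *m M *m M)) !mulmxA.
rewrite !exprS expr0 mulr1 !(mulrBl, mulrBr) !(mul1r, mulr1) -expr2 -exprS.
rewrite !raddfB /= mxtrace_mulmx_expC [\tr (_ ^+ 2)]mxtrace_mulmx_expC mxtrace1.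
rewrite /M; set H := X^T *m X.
rewrite !mulmxE !(mulrBl, mulrBr) !(mulr_natr, mulr_natl, mulrnAl, mulrnAr).
rewrite -!mulrA -expr2 -exprS !raddfB !raddfMn /= mxtrace1.
ring.
Qed.
End TraceIdentities.

Lemma mxtrace_cube (R : pzSemiRingType) n (A : 'M[R]_n) :
  \tr (A ^+ 3) = \sum_i \sum_j \sum_k A i j * A j k * A k i.
Proof.
apply: eq_bigr => i _; rewrite exprS expr2 mxE; apply: eq_bigr => j _.
by rewrite mxE mulr_sumr; apply: eq_bigr => k _; rewrite mulrA.
Qed.

Lemma sumr_le0_eq0 (R : numDomainType) (I : finType) (F : I -> R) :
  (forall i, F i <= 0) -> \sum_i F i = 0 -> forall i, F i = 0.
Proof.
move=> F_le0 sumF0 i; apply/eqP; rewrite -oppr_eq0; apply/eqP.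
apply: (@psumr_eq0P _ _ predT (fun i => - F i)) => // [j _|].
  by rewrite oppr_ge0.
by rewrite sumrN sumF0 oppr0.
Qed.

Section GramBound.
Context {R : realDomainType}.

Lemma mxtrace_mulmx_trmx_ge0 m n (Z : 'M[R]_(m, n)) : 0 <= \tr (Z *m Z^T).
Proof.
apply: sumr_ge0 => i _; rewrite mxE; apply: sumr_ge0 => j _.
by rewrite mxE -expr2 sqr_ge0.
Qed.

Lemma mxtrace_gram_cube_ge m n (X : 'M[R]_(m, n)) :
  3 * \tr (X *m X^T) - m%:R - 4 * n%:R <= \tr ((X *m X^T - 1) ^+ 3).
Proof.
by rewrite mxtrace_gram_cube !lerD2r lerDr addr_ge0 ?mxtrace_mulmx_trmx_ge0.
Qed.

End GramBound.

Section NonpositiveTriangles.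
Context {R : realDomainType} {n : nat} {A : 'M[R]_n}.
Hypothesis A_diag0 : forall i, A i i = 0.
Hypothesis A_triangle_le0 :
  forall i j k, i != j -> j != k -> k != i -> A i j * A j k * A k i <= 0.

Lemma mx_triangle_le0 i j k : A i j * A j k * A k i <= 0.
Proof.
have [->|ij] := eqVneq i j; first by rewrite A_diag0 !mul0r.
have [->|jk] := eqVneq j k; first by rewrite A_diag0 mulr0 mul0r.
have [->|ki] := eqVneq k i; first by rewrite A_diag0 mulr0.
exact: A_triangle_le0.
Qed.

Lemma mxtrace_cube_le0 : \tr (A ^+ 3) <= 0.
Proof.
rewrite mxtrace_cube; apply: sumr_le0 => i _; apply: sumr_le0 => j _.
by apply: sumr_le0 => k _; apply: mx_triangle_le0.
Qed.

Lemma mxtrace_cube_eq0 :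
  \tr (A ^+ 3) = 0 -> forall i j k, A i j * A j k * A k i = 0.
Proof.
rewrite mxtrace_cube => tr0 i j k.
have sum_k_le0 i' j' : \sum_k A i' j' * A j' k * A k i' <= 0.
  by apply: sumr_le0 => k' _; apply: mx_triangle_le0.
have sum_jk_le0 i' : \sum_j \sum_k A i' j * A j k * A k i' <= 0.
  by apply: sumr_le0 => j' _.
move: k; apply: sumr_le0_eq0 => [k|]; first exact: mx_triangle_le0.
move: j; apply: sumr_le0_eq0 => [j|]; first exact: sum_k_le0.
by move: i; apply: sumr_le0_eq0 => [i|]; first exact: sum_jk_le0.
Qed.

End NonpositiveTriangles.

Lemma dotC (R : realType) d (u v : 'rV[R]_d) : dot u v = dot v u.
Proof. by apply: eq_bigr => i _; rewrite mulrC. Qed.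

Lemma dot0l (R : realType) d (v : 'rV[R]_d) : dot 0 v = 0.
Proof. by apply: big1 => i _; rewrite mxE mul0r. Qed.

Lemma dot_eq1_neq0 (R : realType) d (v : 'rV[R]_d) : dot v v = 1 -> v != 0.
Proof. by apply: contra_eq_neq => ->; rewrite dot0l eq_sym oner_neq0. Qed.

Section ObtuseUnitVectors.
Context {R : realType} {d N : nat} (x : 'I_N -> 'rV[R]_d).
Hypothesis x_unit : forall i, dot (x i) (x i) = 1.
Hypothesis x_obtuse : forall i j k, i != j -> i != k -> j != k ->
  dot (x i) (x j) * dot (x i) (x k) * dot (x j) (x k) <= 0.

Let X : 'M[R]_(N, d) := \matrix_i x i.
Let G : 'M[R]_N := X *m X^T.

Lemma gramE i j : G i j = dot (x i) (x j).
Proof. by rewrite mxE; apply: eq_bigr => k _; rewrite !mxE. Qed.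

Lemma mxtrace_gram : \tr G = N%:R.
Proof.
rewrite /mxtrace (eq_bigr (fun=> 1)) => [|i _]; last by rewrite gramE x_unit.
by rewrite sumr_const card_ord.
Qed.

Lemma gram_sub1E i j : (G - 1) i j = dot (x i) (x j) - (i == j)%:R.
Proof. by rewrite mxE gramE !mxE. Qed.

Lemma gram_sub1_diag0 i : (G - 1) i i = 0.
Proof. by rewrite gram_sub1E x_unit eqxx subrr. Qed.

Lemma gram_sub1_triangleE i j k : i != j -> j != k -> k != i ->
  (G - 1) i j * (G - 1) j k * (G - 1) k i
    = dot (x i) (x j) * dot (x i) (x k) * dot (x j) (x k).
Proof.
move=> ij jk ki; rewrite !gram_sub1E (negbTE ij) (negbTE jk) (negbTE ki) !subr0.
by rewrite [dot (x k) _]dotC mulrAC.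
Qed.

Lemma gram_sub1_triangle_le0 i j k : i != j -> j != k -> k != i ->
  (G - 1) i j * (G - 1) j k * (G - 1) k i <= 0.
Proof. by move=> ij jk ki; rewrite gram_sub1_triangleE // x_obtuse // eq_sym. Qed.

Lemma mxtrace_gram_sub1_cube_bounds :
  2 * N%:R - 4 * d%:R <= \tr ((G - 1) ^+ 3) <= 0.
Proof.
rewrite (mxtrace_cube_le0 gram_sub1_diag0 gram_sub1_triangle_le0) andbT.
by have := mxtrace_gram_cube_ge _ _ X; rewrite mxtrace_gram; lra.
Qed.

Lemma obtuse_card_le : (N <= 2 * d)%N.
Proof.
have /andP[cube_ge cube_le0] := mxtrace_gram_sub1_cube_bounds.
by rewrite -(ler_nat R) natrM; lra.
Qed.

Lemma obtuse_card_eq_nearly_orthogonal :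
  N = (2 * d)%N -> nearly_orthogonal (fun v => exists i, v = x i).
Proof.
move=> N2d; have /andP[cube_ge cube_le0] := mxtrace_gram_sub1_cube_bounds.
have cube0 : \tr ((G - 1) ^+ 3) = 0.
  have N2dR : N%:R = 2 * d%:R :> R by rewrite N2d natrM.
  by apply/eqP; rewrite eq_le cube_le0 /=; lra.
split=> [_ [i ->]|_ _ _ [i ->] [j ->] [k ->] xij xik xjk].
  exact: dot_eq1_neq0.
have ij : i != j by apply: contraNneq xij => ->.
have ik : i != k by apply: contraNneq xik => ->.
have jk : j != k by apply: contraNneq xjk => ->.
have := mxtrace_cube_eq0 gram_sub1_diag0 gram_sub1_triangle_le0 cube0 i j k.
rewrite gram_sub1_triangleE // 1?eq_sym // => /eqP; rewrite !mulf_eq0 -!orbA.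
by case/or3P=> /eqP; auto.
Qed.

End ObtuseUnitVectors.

Theorem theorem3p1 (R : realType) (d N : nat) (x : 'I_N -> 'rV[R]_d) :
  (0 < d)%N ->
  injective x ->
  (forall i, dot (x i) (x i) = 1) ->
  (forall i j k, i != j -> i != k -> j != k ->
     dot (x i) (x j) * dot (x i) (x k) * dot (x j) (x k) <= 0) ->
  (N <= 2 * d)%N /\
  (N = (2 * d)%N -> nearly_orthogonal (fun v => exists i, v = x i)).
Proof.
move=> _ _ x_unit x_obtuse; split.
  exact: obtuse_card_le x_unit x_obtuse.
exact: obtuse_card_eq_nearly_orthogonal x_unit x_obtuse.
Qed.
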